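(* Let $d$ be a positive integer. Every $312$-avoiding affine permutation in $\widetilde{\mathfrak S}_d$ has a cut point.
   Context: An affine permutation $\pi\in\widetilde{\mathfrak S}_d$ is a bijection $\pi:\mathbb Z\to\mathbb Z$ such that $\pi(i+d)=\pi(i)+d$ for all $i\in\mathbb Z$ and $\sum_{i=0}^{d-1}(\pi(i)-i)=0$. It is $312$-avoiding if there are no integers $i<j<k$ with $\pi(j)<\pi(k)<\pi(i)$. A cut point of $\pi$ is an integer $j$ such that $\pi(i)<\pi(k)$ for all integers $i\le j<k$. *)

From Stdlib Require Import ZArith Lia.
Open Scope Z_scope.

Fixpoint disp_sum (pi : Z -> Z) (n : nat) : Z :=
  match n with
  | O => 0
  | S m => disp_sum pi m + (pi (Z.of_nat m) - Z.of_nat m)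
  end.

Definition is_affine_perm (d : nat) (pi : Z -> Z) : Prop :=
  (forall x y, pi x = pi y -> x = y) /\
  (forall y, exists x, pi x = y) /\
  (forall i, pi (i + Z.of_nat d) = pi i + Z.of_nat d) /\
  disp_sum pi d = 0.

Definition avoids312 (pi : Z -> Z) : Prop :=
  ~ (exists i j k, i < j /\ j < k /\ pi j < pi k /\ pi k < pi i).

Definition is_cut_point (pi : Z -> Z) (j : Z) : Prop :=
  forall i k, i <= j -> j < k -> pi i < pi k.

(* Since pi (i + d) = pi i + d, the displacement pi j - j is periodic and hence
   bounded below.  If j is not a cut point there are i <= j < k with
   pi k < pi i, and 312-avoidance (with injectivity) forces pi k < pi j: a later
   position with a smaller value.  Without any cut point this step can be
   iterated forever, each step lowering the displacement by at least one,
   contradicting the lower bound. *)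
From Stdlib Require Import ZArith Lia Classical.
Open Scope Z_scope.

Lemma lower_bound_on_range (f : Z -> Z) (n : nat) :
  exists L, forall r, 0 <= r < Z.of_nat n -> L <= f r.
Proof.
  induction n as [|n [L HL]].
  - exists 0; lia.
  - exists (Z.min L (f (Z.of_nat n))); intros r Hr.
    destruct (Z.eq_dec r (Z.of_nat n)) as [->|Hne]; [lia|].
    specialize (HL r ltac:(lia)); lia.
Qed.

Section Periodic.

Variables (pi : Z -> Z) (D : Z).
Hypothesis pi_shift : forall i, pi (i + D) = pi i + D.

Lemma pi_shift_nat (n : nat) i : pi (i + Z.of_nat n * D) = pi i + Z.of_nat n * D.
Proof.
  induction n as [|n IH].
  - now rewrite !Z.add_0_r.
  - rewrite Nat2Z.inj_succ.
    replace (i + Z.succ (Z.of_nat n) * D) with (i + Z.of_nat n * D + D) by ring.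
    rewrite pi_shift, IH; ring.
Qed.

Lemma pi_shift_mul q i : pi (i + q * D) = pi i + q * D.
Proof.
  destruct (Z_le_gt_dec 0 q) as [Hq|Hq].
  - replace q with (Z.of_nat (Z.to_nat q)) by lia; apply pi_shift_nat.
  - pose proof (pi_shift_nat (Z.to_nat (- q)) (i + q * D)) as H.
    replace (i + q * D + Z.of_nat (Z.to_nat (- q)) * D) with i in H by lia.
    lia.
Qed.

Lemma displacement_bounded_below :
  0 < D -> exists L, forall j, L <= pi j - j.
Proof.
  intros HD.
  destruct (lower_bound_on_range (fun r => pi r - r) (Z.to_nat D)) as [L HL].
  exists L; intros j.
  pose proof (Z.mod_pos_bound j D HD).
  pose proof (Z_div_mod_eq_full j D).
  pose proof (pi_shift_mul (j / D) (j mod D)) as Hj.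
  replace (j mod D + j / D * D) with j in Hj by lia.
  specialize (HL (j mod D) ltac:(lia)); cbv beta in HL; lia.
Qed.

End Periodic.

Lemma smaller_value_after_non_cut_point (pi : Z -> Z) j :
  (forall x y, pi x = pi y -> x = y) -> avoids312 pi -> ~ is_cut_point pi j ->
  exists k, j < k /\ pi k < pi j.
Proof.
  intros Hinj Hav Hcut.
  destruct (classic (exists i k, i <= j /\ j < k /\ pi k < pi i))
    as [[i [k [Hij [Hjk Hki]]]]|Hnone].
  - exists k; split; [exact Hjk|].
    destruct (Z.eq_dec i j) as [<-|Hne]; [exact Hki|].
    assert (pi k <> pi j) by (intros E; apply Hinj in E; lia).
    destruct (Z_lt_le_dec (pi k) (pi j)) as [|Hjk']; [assumption|].
    exfalso; apply Hav; exists i, j, k; lia.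
  - exfalso; apply Hcut; intros i k Hi Hk.
    assert (pi i <> pi k) by (intros E; apply Hinj in E; lia).
    destruct (Z_lt_le_dec (pi i) (pi k)) as [|Hki]; [assumption|].
    exfalso; apply Hnone; exists i, k; lia.
Qed.

Lemma displacement_unbounded_below (pi : Z -> Z) :
  (forall j, exists k, j < k /\ pi k < pi j) ->
  forall n : nat, exists k, pi k - k <= pi 0 - Z.of_nat n.
Proof.
  intros Hstep n; induction n as [|n [k Hk]].
  - exists 0; lia.
  - destruct (Hstep k) as [k' [Hkk' Hpi]]; exists k'; lia.
Qed.

Theorem corollary4p3 (d : nat) (pi : Z -> Z) :
  (0 < d)%nat -> is_affine_perm d pi -> avoids312 pi ->
  exists j : Z, is_cut_point pi j.
Proof.
  intros Hd [Hinj [_ [Hper _]]] Hav.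
  destruct (displacement_bounded_below pi (Z.of_nat d) Hper ltac:(lia)) as [L HL].
  apply NNPP; intros Hno.
  assert (Hstep : forall j, exists k, j < k /\ pi k < pi j).
  { intros j; apply smaller_value_after_non_cut_point; auto.
    intros Hj; apply Hno; exists j; exact Hj. }
  destruct (displacement_unbounded_below pi Hstep (Z.to_nat (pi 0 - L + 1))) as [k Hk].
  specialize (HL k); lia.
Qed.
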